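(* Let $k,k'\in\mathbb{N}$ with $1\le k'\le k$. Let $\bar w,\bar x,\bar y,\bar z$ be binary sequences with $|\bar w|\ge|\bar x|\ge|\bar y|\ge|\bar z|$, each of which is top $k'$ sorted, and let $s=|\bar w|+|\bar x|+|\bar y|+|\bar z|\ge k$. Then $\mathrm{4oe\_merge}^s_k(\bar w,\bar x,\bar y,\bar z)$ is top $k'$ sorted.
   Context: Sorted means non-increasing. A binary sequence $\bar r$ of length $n$ is top $k'$ sorted if $\langle r_1,\dots,r_{\min(k',n)}\rangle$ is sorted and $r_i\ge r_j$ for all $i\le k'<j\le n$ (for $n\le k'$ this just means sorted). $\bar r_{odd}=\langle r_1,r_3,\dots\rangle$, $\bar r_{even}=\langle r_2,r_4,\dots\rangle$. For sequences $\bar a^1,\dots,\bar a^p$ with non-increasing lengths, $\mathrm{zip}(\bar a^1,\dots,\bar a^p)$ lists their elements in row-major order: $\langle a^1_1,a^2_1,\dots,a^p_1\rangle$ followed by $\mathrm{zip}$ of the remainders, where sequences that become empty are omitted. $\mathrm{oe\_combine}_K(\bar a,\bar b)$ (for $|\bar a|\ge|\bar b|$): let $\bar u=\mathrm{zip}(\bar a,\bar b)$; for $i=1,\dots,\lfloor\min(K,|\bar u|-1)/2\rfloor$ replace $(u_{2i},u_{2i+1})$ by $(\max,\min)$ of the pair; return $\bar u$. The network $\mathrm{4oe\_merge}^s_k(\bar w,\bar x,\bar y,\bar z)$ (for $|\bar w|\ge|\bar x|\ge|\bar y|\ge|\bar z|$, $s$ their total length, $k\ge 0$) is defined recursively, with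 $k_1,\dots,k_4$ the lengths of $\bar w,\bar x,\bar y,\bar z$: if $k_2=0$, return $\bar w$; else if $k_1=1$, return $\mathrm{zip}(\bar w,\bar x,\bar y,\bar z)$ sorted into non-increasing order; otherwise let $sa=\sum_j\lceil k_j/2\rceil$, $sb=\sum_j\lfloor k_j/2\rfloor$, $\bar a=\mathrm{4oe\_merge}^{sa}_{\min(sa,\lfloor k/2\rfloor+2)}(\bar w_{odd},\bar x_{odd},\bar y_{odd},\bar z_{odd})$, $\bar b=\mathrm{4oe\_merge}^{sb}_{\min(sb,\lfloor k/2\rfloor)}(\bar w_{even},\bar x_{even},\bar y_{even},\bar z_{even})$, $\bar c=\mathrm{oe\_combine}_{\lfloor k/2\rfloor+1}(\bar a_{odd},\bar b_{odd})$, $\bar d=\mathrm{oe\_combine}_{\lfloor k/2\rfloor}(\bar a_{even},\bar b_{even})$, and return $\mathrm{oe\_combine}_k(\bar c,\bar d)$. *)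

(* Binary sequences are [seq bool]; true = 1, false = 0.
   "Sorted" means non-increasing. Indices in the paper are 1-based; here 0-based. *)
From mathcomp Require Import all_boot.
Set Implicit Arguments. Unset Strict Implicit. Unset Printing Implicit Defensive.

Definition geb (a b : bool) : bool := b ==> a.

Definition sorted_desc (r : seq bool) : bool := sorted geb r.

Definition top_sorted (k' : nat) (r : seq bool) : bool :=
  sorted_desc (take k' r) &&
  all (fun a => all (fun b => geb a b) (drop k' r)) (take k' r).

(* r_odd = <r_1, r_3, ...> (1-based), r_even = <r_2, r_4, ...> *)
Definition odds (T : Type) (r : seq T) : seq T :=
  [seq x.2 | x <- zip (iota 0 (size r)) r & ~~ odd x.1].
Definition evens (T : Type) (r : seq T) : seq T :=
  [seq x.2 | x <- zip (iota 0 (size r)) r & odd x.1].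

(* zip(a^1,...,a^p) in row-major order, omitting exhausted sequences *)
Definition zipn (T : Type) (ls : seq (seq T)) : seq T :=
  flatten [seq pmap (fun l => onth l i) ls
          | i <- iota 0 (foldr maxn 0 (map size ls))].

(* oe_combine_K(a, b): u = zip(a,b); for i = 1..floor(min(K,|u|-1)/2),
   (u_{2i}, u_{2i+1}) := (max, min) (1-based).  In 0-based indices the pair is
   (2i-1, 2i). *)
Definition oe_combine (K : nat) (a b : seq bool) : seq bool :=
  let u := zipn [:: a; b] in
  let m := (minn K (size u).-1)./2 in
  mkseq (fun j =>
    if odd j && (j.+1./2 <= m) then nth false u j || nth false u j.+1
    else if ~~ odd j && (0 < j) && (j./2 <= m) then nth false u j.-1 && nth false u j
    else nth false u j) (size u).

Definition sort_desc (r : seq bool) : seq bool := sort geb r.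

(* 4oe_merge with fuel; the superscript s is the total length of the inputs,
   which strictly decreases on recursive calls, so fuel s suffices. *)
Fixpoint merge4_rec (fuel k : nat) (w x y z : seq bool) : seq bool :=
  match fuel with
  | 0 => w
  | n.+1 =>
    if size x == 0 then w
    else if size w == 1 then sort_desc (zipn [:: w; x; y; z])
    else
      let sa := uphalf (size w) + uphalf (size x) + uphalf (size y) + uphalf (size z) in
      let sb := (size w)./2 + (size x)./2 + (size y)./2 + (size z)./2 in
      let a := merge4_rec n (minn sa (k./2 + 2)) (odds w) (odds x) (odds y) (odds z) in
      let b := merge4_rec n (minn sb k./2) (evens w) (evens x) (evens y) (evens z) in
      let c := oe_combine (k./2 + 1) (odds a) (odds b) in
      let d := oe_combine k./2 (evens a) (evens b) in
      oe_combine k c d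
  end.

Definition merge4 (k : nat) (w x y z : seq bool) : seq bool :=
  merge4_rec (size w + size x + size y + size z) k w x y z.

From mathcomp Require Import all_boot zify.
Set Implicit Arguments. Unset Strict Implicit. Unset Printing Implicit Defensive.

(* For a binary sequence, being top k' sorted says exactly that its first
   min(k', #ones) entries are ones.  The network permutes its input, so it is
   enough to bound the leading run of ones of the output from below.  If the
   inputs start with p_w, p_x, p_y, p_z ones, their odd and even subsequences
   start with ceil(p/2) and floor(p/2) ones, so the two recursive merges return
   leading runs whose lengths differ by at most four; interleaving them leaves
   at most one hole in the run, which the comparators of oe_combine repair
   within the first k positions.  Hence the output starts with at least
   min(k, p_w + p_x + p_y + p_z) ones, and p = min(k', #ones) gives the claim. *)

Section OddsEvens.
Variable T : Type.
Implicit Types (r : seq T) (x : T).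

Definition parity_sub (b : bool) (m : nat) r : seq T :=
  [seq p.2 | p <- zip (iota m (size r)) r & odd p.1 (+) b].

Lemma parity_sub_cons b m x r :
  parity_sub b m (x :: r) = if odd m (+) b then x :: parity_sub b m.+1 r
                            else parity_sub b m.+1 r.
Proof. by rewrite /parity_sub /=; case: ifP. Qed.

Lemma parity_subS b m r : parity_sub b m.+1 r = parity_sub (~~ b) m r.
Proof.
elim: r b m => [|x r IH] b m //.
by rewrite !parity_sub_cons IH /= addbN addNb.
Qed.

Lemma odds_cons x r : odds (x :: r) = x :: evens r.
Proof.
have -> : odds (x :: r) = parity_sub true 0 (x :: r).
  by congr map; apply: eq_filter => -[i v] /=; rewrite addbT.
have -> : evens r = parity_sub false 0 r.
  by congr map; apply: eq_filter => -[i v] /=; rewrite addbF.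
by rewrite parity_sub_cons parity_subS.
Qed.

Lemma evens_cons x r : evens (x :: r) = odds r.
Proof.
have -> : evens (x :: r) = parity_sub false 0 (x :: r).
  by congr map; apply: eq_filter => -[i v] /=; rewrite addbF.
have -> : odds r = parity_sub true 0 r.
  by congr map; apply: eq_filter => -[i v] /=; rewrite addbT.
by rewrite parity_sub_cons parity_subS.
Qed.

Lemma evens_odds_behead r : evens r = odds (behead r).
Proof. by case: r => [|x r] //; rewrite evens_cons. Qed.

Lemma size_odds_evens r :
  size (odds r) = uphalf (size r) /\ size (evens r) = (size r)./2.
Proof. by elim: r => [|x r [IHo IHe]] //; rewrite odds_cons evens_cons /= IHo IHe. Qed.

Lemma size_odds r : size (odds r) = uphalf (size r).
Proof. exact: (size_odds_evens r).1. Qed.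

Lemma size_evens r : size (evens r) = (size r)./2.
Proof. exact: (size_odds_evens r).2. Qed.

Lemma nth_odds x0 r i : nth x0 (odds r) i = nth x0 r i.*2.
Proof.
elim: i r => [|i IH] [|x r] //; rewrite ?nth_nil // odds_cons /=.
by rewrite evens_odds_behead IH nth_behead.
Qed.

Lemma nth_evens x0 r i : nth x0 (evens r) i = nth x0 r i.*2.+1.
Proof. by rewrite evens_odds_behead nth_odds nth_behead. Qed.

Lemma count_odds_evens (p : pred T) r : count p (odds r) + count p (evens r) = count p r.
Proof. by elim: r => [|x r IH] //; rewrite odds_cons evens_cons /= -IH; lia. Qed.

End OddsEvens.

Section Zipn.
Variable T : Type.
Implicit Types (a b : seq T) (ls : seq (seq T)).

Lemma max_size_behead ls :
  foldr maxn 0 (map size (map behead ls)) = (foldr maxn 0 (map size ls)).-1.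
Proof. by elim: ls => [|l ls IH] //=; rewrite IH size_behead; lia. Qed.

Lemma zipn_heads ls :
  zipn ls = pmap (fun l => onth l 0) ls ++ zipn (map behead ls).
Proof.
rewrite /zipn max_size_behead; case E: (foldr maxn 0 (map size ls)) => [|n] /=.
  elim: ls E => [|[|x l] ls IH] //=; first by rewrite max0n => /IH.
  by rewrite maxnE addSn.
congr cat; rewrite -[1]/(1 + 0) iotaDl -map_comp; congr flatten.
apply: eq_map => i /=; elim: ls {E} => [|l ls IH] //=.
by rewrite IH; case: l => [|x l] //=; rewrite onth0n.
Qed.

Lemma zipn2_cons x y a b : zipn [:: x :: a; y :: b] = x :: y :: zipn [:: a; b].
Proof. by rewrite zipn_heads. Qed.

Lemma zipn2_nil a : zipn [:: a; [::]] = a.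
Proof. by elim: a => [|x a IH] //; rewrite zipn_heads /= IH. Qed.

Lemma size_zipn2 a b : size b <= size a -> size (zipn [:: a; b]) = size a + size b.
Proof.
elim: b a => [|y b IH] a le_ba; first by rewrite zipn2_nil addn0.
by case: a le_ba => [|x a] //= le_ba; rewrite zipn2_cons /= IH // addnS.
Qed.

Lemma nth_zipn2 x0 a b j : size b <= size a ->
  nth x0 (zipn [:: a; b]) j =
    if j < (size b).*2 then nth x0 (if odd j then b else a) j./2
    else nth x0 a (j - size b).
Proof.
elim: b a j => [|y b IH] a j; first by rewrite zipn2_nil subn0.
case: a => [|x a] //= le_ba; rewrite zipn2_cons; case: j => [|[|j]] //=.
rewrite IH // negbK doubleS !ltnS subSS; case: ltnP => [_|le_bj]; first by case: odd.
by rewrite subSn //; apply: leq_trans le_bj; rewrite -addnn leq_addl.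
Qed.

Lemma zipn_flatten ls : all (fun l => size l <= 1) ls -> zipn ls = flatten ls.
Proof.
move=> small; rewrite zipn_heads.
have max_le1 : foldr maxn 0 (map size ls) <= 1.
  by elim: ls small => [|l ls IH] //= /andP[le1 /IH]; rewrite geq_max le1.
have -> : zipn (map behead ls) = [::].
  by rewrite /zipn max_size_behead; case: (foldr _ _ _) max_le1 => [|[]].
rewrite cats0; elim: ls small {max_le1} => [|l ls IH] //= /andP[le1 /IH <-].
by case: l le1 => [|x []].
Qed.

End Zipn.

Lemma perm_zipn2 (T : eqType) (a b : seq T) :
  size b <= size a -> perm_eq (zipn [:: a; b]) (a ++ b).
Proof.
elim: b a => [|y b IH] a; first by rewrite zipn2_nil cats0.
case: a => [|x a] //= le_ba; rewrite zipn2_cons perm_cons.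
by rewrite -[y :: b]cat1s perm_sym perm_catCA /= perm_cons perm_sym IH.
Qed.

Definition exchange_pairs (h : nat -> bool) (m j : nat) : bool :=
  if odd j && (j.+1./2 <= m) then h j || h j.+1
  else if ~~ odd j && (0 < j) && (j./2 <= m) then h j.-1 && h j
  else h j.

Lemma oe_combineE K a b :
  oe_combine K a b =
  mkseq (exchange_pairs (nth false (zipn [:: a; b])) (minn K (size (zipn [:: a; b])).-1)./2)
        (size (zipn [:: a; b])).
Proof. by []. Qed.

Lemma count_exchange_pairs h m n :
  m.*2 < n -> count (exchange_pairs h m) (iota 0 n) = count h (iota 0 n).
Proof.
elim: m => [|m IH] lt_mn.
  by apply: eq_count => j; rewrite /exchange_pairs; case: ifP; [lia|]; case: ifP; [lia|].
rewrite -IH; last lia.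
have -> : n = m.*2.+1 + (2 + (n - m.*2.+3)) by lia.
rewrite !iotaD !count_cat; congr (_ + (_ + _)).
- apply: eq_in_count => j; rewrite mem_iota => lt_j.
  by rewrite /exchange_pairs; repeat case: ifP => ?; lia.
- rewrite /= /exchange_pairs /= odd_double doubleK uphalf_double ltnSn ltnn leqnn /=.
  by case: (h m.*2.+1); case: (h m.*2.+2).
- apply: eq_in_count => j; rewrite mem_iota => lt_j.
  by rewrite /exchange_pairs; repeat case: ifP => ?; lia.
Qed.

Lemma size_oe_combine K a b : size b <= size a -> size (oe_combine K a b) = size a + size b.
Proof. by move=> le_ba; rewrite size_mkseq size_zipn2. Qed.

Lemma count_oe_combine K a b :
  size b <= size a -> count id (oe_combine K a b) = count id a + count id b.
Proof.
move=> le_ba; rewrite -count_cat -(permP (perm_zipn2 le_ba)) oe_combineE.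
set u := zipn _; rewrite /mkseq count_map.
case E: (size u) => [|n]; first by move/size0nil: E => ->.
rewrite count_exchange_pairs; last lia.
by rewrite -E -[in RHS](mkseq_nth false u) count_map.
Qed.

Definition lead_ones (n : nat) (r : seq bool) := forall i, i < n -> nth false r i.

Lemma lead_ones_size n r : lead_ones n r -> n <= size r.
Proof. by move=> r_n; rewrite leqNgt; apply/negP => /r_n; rewrite nth_default. Qed.

Lemma lead_onesW m n r : lead_ones n r -> m <= n -> lead_ones m r.
Proof. by move=> r_n le_mn i lt_im; apply: r_n; apply: leq_trans le_mn. Qed.

Lemma lead_ones_count n r : lead_ones n r -> n <= count id r.
Proof.
elim: r n => [|v r IH] [|n] // r_n; first by have := r_n 0 isT.
have /= -> := r_n 0 isT; rewrite add1n ltnS; apply: IH => i; exact: (r_n i.+1).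
Qed.

Lemma geb_total : total geb.
Proof. by do 2 case. Qed.

Lemma geb_trans : transitive geb.
Proof. by do 3 case. Qed.

Lemma sorted_lead_ones s : sorted geb s -> lead_ones (count id s) s.
Proof.
elim: s => [|v s IH] //= s_sorted; have := IH (path_sorted s_sorted).
case: v s_sorted => [_ s_n [|i] //|s_sorted _]; first exact: s_n.
have : all (geb false) s by apply: order_path_min s_sorted => [] [] [] [].
rewrite add0n => s_false; suff -> : count id s = 0 by [].
by apply/eqP; rewrite -leqn0 leqNgt -has_count -all_predC.
Qed.

Lemma lead_ones_odds n r : lead_ones n r -> lead_ones (uphalf n) (odds r).
Proof. by move=> r_n i lt_i; rewrite nth_odds; apply: r_n; lia. Qed.

Lemma lead_ones_evens n r : lead_ones n r -> lead_ones n./2 (evens r).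
Proof. by move=> r_n i lt_i; rewrite nth_evens; apply: r_n; lia. Qed.

(* Interleaving runs of [al] and [be] ones yields a run of [min (al + be) (2 al)]
   ones, unless the run of [b] stops first and leaves a hole at position
   [2 be + 1]; the comparator on the pair (2 be + 1, 2 be + 2), if present,
   fills it when [a] still has a one there. *)
Definition oe_lead (al be na nb K : nat) : nat :=
  if be < nb then
    minn (al + be) (minn al.*2 (if be < (minn K (na + nb).-1)./2 then be.*2.+2 else be.*2.+1))
  else minn (al + be) al.*2.

Lemma lead_ones_oe_combine K a b al be :
  size b <= size a -> lead_ones al a -> lead_ones be b ->
  lead_ones (oe_lead al be (size a) (size b) K) (oe_combine K a b).
Proof.
move=> le_ba a_al b_be; have le_al := lead_ones_size a_al; have le_be := lead_ones_size b_be.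
set L := oe_lead _ _ _ _ _.
pose u := zipn [:: a; b]; pose m := (minn K (size u).-1)./2.
have u_ones i : i < L -> (be < size b -> i != be.*2.+1) -> nth false u i.
{ rewrite /u nth_zipn2 // /L /oe_lead.
  case: (ltnP be (size b)) => [lt_be_b|ge_be_b] lt_iL ne_i.
  1: have {ne_i} /eqP ne_i := ne_i isT; move: lt_iL; case: ifP => _ lt_iL.
  all: case: (ltnP i (size b).*2) => [lt_ib|ge_ib]; [case: (boolP (odd i)) => odd_i|].
  all: first [apply: b_be | apply: a_al]; lia. }
have [le_L1 le_L2 le_L3] : [/\ L <= al + be, L <= al.*2 &
                              be < size b -> L <= (if be < m then be.*2.+2 else be.*2.+1)].
  rewrite /L /oe_lead /m /u size_zipn2 //.
  by case: ifP => [lt_be|ge_be]; [case: ifP => _|]; split; lia.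
clearbody L => j lt_jL; rewrite oe_combineE nth_mkseq -/u; last by rewrite size_zipn2 //; lia.
rewrite /exchange_pairs -/m.
case: ifP => [_|no_odd_ex].
  case: (boolP ((be < size b) && (j == be.*2.+1))) => [/andP[lt_be_b /eqP j_eq]|ne_j].
    apply/orP; right; rewrite /u nth_zipn2 // j_eq /= odd_double /= doubleK.
    by case: ifP => _; apply: a_al; lia.
  by rewrite u_ones //; move: ne_j; lia.
case: ifP => [/andP[/andP[even_j j_pos] le_jm]|_]; last first.
  by rewrite u_ones //; move: le_L3; case: ifP => be_m; lia.
by rewrite !u_ones //; move: le_L3; case: ifP => _; lia.
Qed.

Lemma oe_lead_balanced al be na nb K : be <= al <= be + 2 ->
  oe_lead al be na nb K =
  if (al == be + 2) && (be < nb) && ~~ ((be.*2.+2 <= K) && (be.*2.+3 <= na + nb))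
  then be.*2.+1 else al + be.
Proof. by move=> le_be_al; rewrite /oe_lead; repeat case: ifP => ?; lia. Qed.

Lemma leq_oe_lead x al be na nb K : x <= al + be -> x <= al.*2 ->
  (be < nb -> x <= be.*2.+1 \/ x <= be.*2.+2 /\ be.*2.+2 <= K /\ be.*2.+3 <= na + nb) ->
  x <= oe_lead al be na nb K.
Proof.
rewrite /oe_lead => le_x1 le_x2 le_x3; case: ifP => lt_be; last lia.
by case: (le_x3 lt_be) => [|[? []]]; case: ifP; lia.
Qed.

Lemma oe_merge_step_bound k p q sa sb :
  sb <= sa -> p <= sa -> q <= sb -> q <= p <= q + 4 -> q <= k./2 -> p <= k./2 + 2 ->
  minn k (p + q) <=
  oe_lead (oe_lead (uphalf p) (uphalf q) (uphalf sa) (uphalf sb) (k./2 + 1))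
          (oe_lead p./2 q./2 sa./2 sb./2 k./2)
          (uphalf sa + uphalf sb) (sa./2 + sb./2) k.
Proof.
move=> le_sb le_psa le_qsb le_qp le_qk le_pk.
rewrite (@oe_lead_balanced (uphalf p)); last lia.
rewrite (@oe_lead_balanced p./2); last lia.
have halves n : uphalf n + n./2 = n /\ n./2 <= uphalf n <= n./2 + 1 by lia.
(* Abstracting the halves as independent unknowns keeps the case split within reach of lia. *)
move: (halves p) (halves q) (halves sa) (halves sb) (halves k) le_qk le_pk.
move: (uphalf p) (p./2) (uphalf q) (q./2) (uphalf sa) (sa./2) (uphalf sb) (sb./2) (k./2).
move=> P p2 Q q2 SA sa2 SB sb2 h [hp1 hp2] [hq1 hq2] [hs1 hs2] [ht1 ht2] [hk1 hk2] le_qk le_pk.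
by case: ifP => ?; case: ifP => ?; apply: leq_oe_lead; lia.
Qed.

Lemma lead_ones_oe_merge_step k a b p q :
  size b <= size a -> q <= p <= q + 4 -> q <= k./2 -> p <= k./2 + 2 ->
  lead_ones p a -> lead_ones q b ->
  lead_ones (minn k (p + q))
    (oe_combine k (oe_combine (k./2 + 1) (odds a) (odds b))
                  (oe_combine k./2 (evens a) (evens b))).
Proof.
move=> le_ba le_qp le_qk le_pk a_p b_q.
have le_odds : size (odds b) <= size (odds a) by rewrite !size_odds uphalf_leq.
have le_evens : size (evens b) <= size (evens a) by rewrite !size_evens half_leq.
have le_cd : size (oe_combine k./2 (evens a) (evens b))
             <= size (oe_combine (k./2 + 1) (odds a) (odds b)).
  by rewrite !size_oe_combine // !size_odds !size_evens; lia.
apply: (lead_onesW (lead_ones_oe_combine le_cd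
  (lead_ones_oe_combine le_odds (lead_ones_odds a_p) (lead_ones_odds b_q))
  (lead_ones_oe_combine le_evens (lead_ones_evens a_p) (lead_ones_evens b_q)))).
rewrite !size_oe_combine // !size_odds !size_evens.
by apply: oe_merge_step_bound;
  rewrite ?half_leq ?uphalf_leq ?(lead_ones_size a_p) ?(lead_ones_size b_q).
Qed.

Lemma merge4_rec_size_count fuel k w x y z :
  size z <= size y -> size y <= size x -> size x <= size w ->
  size w + size x + size y + size z <= fuel ->
  size (merge4_rec fuel k w x y z) = size w + size x + size y + size z /\
  count id (merge4_rec fuel k w x y z) = count id w + count id x + count id y + count id z.
Proof.
elim: fuel k w x y z => [|n IH] k w x y z le_zy le_yx le_xw le_fuel /=.
  have [] : [/\ size w = 0, size x = 0, size y = 0 & size z = 0] by split; lia.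
  by move=> /size0nil -> /size0nil -> /size0nil -> /size0nil ->.
case: eqP => [/size0nil x_nil|x_nonnil].
  have [/size0nil y_nil /size0nil z_nil] : size y = 0 /\ size z = 0.
    by rewrite x_nil /= in le_yx; split; lia.
  by rewrite x_nil y_nil z_nil /= !addn0.
case: eqP => [w1|w_not1].
  have small : all (fun l => size l <= 1) [:: w; x; y; z].
    by apply/allP => l; rewrite !inE => /or4P[] /eqP ->; lia.
  rewrite /sort_desc size_sort count_sort zipn_flatten //= !size_cat !count_cat /=.
  by split; lia.
have rec_odds k' :
    size (merge4_rec n k' (odds w) (odds x) (odds y) (odds z)) =
      uphalf (size w) + uphalf (size x) + uphalf (size y) + uphalf (size z) /\
    count id (merge4_rec n k' (odds w) (odds x) (odds y) (odds z)) =
      count id (odds w) + count id (odds x) + count id (odds y) + count id (odds z).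
  by rewrite -!size_odds; apply: IH; rewrite !size_odds ?uphalf_leq //; lia.
have rec_evens k' :
    size (merge4_rec n k' (evens w) (evens x) (evens y) (evens z)) =
      (size w)./2 + (size x)./2 + (size y)./2 + (size z)./2 /\
    count id (merge4_rec n k' (evens w) (evens x) (evens y) (evens z)) =
      count id (evens w) + count id (evens x) + count id (evens y) + count id (evens z).
  by rewrite -!size_evens; apply: IH; rewrite !size_evens ?half_leq //; lia.
rewrite !size_oe_combine ?count_oe_combine.
all: rewrite ?size_oe_combine ?size_odds ?size_evens ?(rec_odds _).1 ?(rec_evens _).1; try lia.
split; first lia.
rewrite addnACA !count_odds_evens (rec_odds _).2 (rec_evens _).2.
have := count_odds_evens id w; have := count_odds_evens id x.
have := count_odds_evens id y; have := count_odds_evens id z.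
lia.
Qed.

Lemma merge4_rec_lead_ones fuel k w x y z pw px py pz :
  size z <= size y -> size y <= size x -> size x <= size w ->
  size w + size x + size y + size z <= fuel ->
  lead_ones pw w -> lead_ones px x -> lead_ones py y -> lead_ones pz z ->
  lead_ones (minn k (pw + px + py + pz)) (merge4_rec fuel k w x y z).
Proof.
elim: fuel k w x y z pw px py pz => [|n IH] k w x y z pw px py pz le_zy le_yx le_xw le_fuel
  w_pw x_px y_py z_pz /=.
all: have := lead_ones_size w_pw; have := lead_ones_size x_px.
all: have := lead_ones_size y_py; have := lead_ones_size z_pz.
  by move=> le_z le_y le_x le_w i lt_i; lia.
move=> le_pz le_py le_px le_pw.
case: eqP => [/size0nil x_nil|x_nonnil].
  have [/size0nil y_nil /size0nil z_nil] : size y = 0 /\ size z = 0.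
    by rewrite x_nil /= in le_yx; split; lia.
  by apply: (lead_onesW w_pw); rewrite x_nil y_nil z_nil /= in le_px le_py le_pz; lia.
case: eqP => [w1|w_not1].
  have small : all (fun l => size l <= 1) [:: w; x; y; z].
    by apply/allP => l; rewrite !inE => /or4P[] /eqP ->; lia.
  apply: (lead_onesW (sorted_lead_ones (sort_sorted geb_total _))).
  rewrite count_sort zipn_flatten //= !count_cat /=.
  have := lead_ones_count w_pw; have := lead_ones_count x_px.
  have := lead_ones_count y_py; have := lead_ones_count z_pz.
  lia.
set sa := uphalf (size w) + _ + _ + _; set sb := (size w)./2 + _ + _ + _.
have a_ones : lead_ones (minn (minn sa (k./2 + 2))
                          (uphalf pw + uphalf px + uphalf py + uphalf pz))
                (merge4_rec n (minn sa (k./2 + 2)) (odds w) (odds x) (odds y) (odds z)).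
  by apply: IH; rewrite ?size_odds ?uphalf_leq //; try exact: lead_ones_odds; lia.
have b_ones : lead_ones (minn (minn sb k./2) (pw./2 + px./2 + py./2 + pz./2))
                (merge4_rec n (minn sb k./2) (evens w) (evens x) (evens y) (evens z)).
  by apply: IH; rewrite ?size_evens ?half_leq //; try exact: lead_ones_evens; lia.
have le_ab : size (merge4_rec n (minn sb k./2) (evens w) (evens x) (evens y) (evens z))
             <= size (merge4_rec n (minn sa (k./2 + 2)) (odds w) (odds x) (odds y) (odds z)).
  by rewrite !(proj1 (merge4_rec_size_count _ _ _ _ _));
    rewrite ?size_odds ?size_evens ?uphalf_leq ?half_leq //; lia.
apply: (lead_onesW (lead_ones_oe_merge_step le_ab _ _ _ a_ones b_ones)); lia.
Qed.

Lemma top_sortedP k r :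
  top_sorted k r <-> (forall i j, i < j -> i < k -> nth false r j -> nth false r i).
Proof.
split=> [/andP[take_sorted /allP dom] i j lt_ij lt_ik r_j|r_mono].
  have lt_jr : j < size r by rewrite ltnNge; apply: contraTN r_j => /(nth_default _) ->.
  case: (ltnP j k) => [lt_jk|le_kj].
    have := sorted_ltn_nth geb_trans false take_sorted.
    move=> /(_ i j); rewrite !inE size_take !nth_take //.
    by case: ifP => _ /(_ _ _ lt_ij) /implyP; apply; lia.
  have r_i_take : nth false r i \in take k r.
    rewrite -(nth_take false lt_ik); apply: mem_nth.
    by rewrite size_take; case: ifP => // _; apply: ltn_trans lt_ij lt_jr.
  apply: (implyP (allP (dom _ r_i_take) (nth false r j) _)) r_j.
  rewrite -(subnKC le_kj) -nth_drop; apply: mem_nth.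
  by rewrite size_drop ltn_sub2r // (leq_ltn_trans le_kj lt_jr).
apply/andP; split.
  apply/(sortedP false) => i; rewrite size_take => lt_i.
  rewrite !nth_take; try (case: ifP lt_i => ? ?; lia).
  by apply/implyP; apply: r_mono => //; case: ifP lt_i => ? ?; lia.
apply/(all_nthP false) => i; rewrite size_take => lt_i.
apply/(all_nthP false) => j; rewrite size_drop => lt_j.
rewrite nth_drop nth_take; last by case: ifP lt_i => ? ?; lia.
by apply/implyP; apply: r_mono; case: ifP lt_i => ? ?; lia.
Qed.

Lemma top_sorted_lead_ones k r : top_sorted k r <-> lead_ones (minn k (count id r)) r.
Proof.
rewrite top_sortedP; split=> [r_mono i lt_i|r_ones i j lt_ij lt_ik r_j].
  apply/negPn/negP => r_i_false.
  have drop_false : count id (drop i r) = 0.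
    apply/eqP; rewrite -leqn0 leqNgt -has_count; apply/(has_nthP false) => -[j lt_j].
    rewrite nth_drop => r_ij; case: j lt_j r_ij => [|j] _.
      by rewrite addn0 (negbTE r_i_false).
    by move/(r_mono i) => /(_ _ _) /idPn; apply => //; lia.
  have := count_cat id (take i r) (drop i r); rewrite cat_take_drop drop_false addn0.
  by have := count_size id (take i r); rewrite size_take; case: ifP => ?; lia.
case: (ltnP i (count id r)) => [lt_ic|le_ci]; first by apply: r_ones; lia.
have take_ones : lead_ones (count id r) (take j r).
  by move=> t lt_t; rewrite nth_take; [apply: r_ones | ]; lia.
have drop_one : lead_ones 1 (drop j r) by case=> // _; rewrite nth_drop addn0.
have := count_cat id (take j r) (drop j r); rewrite cat_take_drop.
by have := lead_ones_count take_ones; have := lead_ones_count drop_one; lia.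
Qed.

Theorem mainTheorem8 (k k' : nat) (w x y z : seq bool) :
  1 <= k' -> k' <= k ->
  size z <= size y -> size y <= size x -> size x <= size w ->
  top_sorted k' w -> top_sorted k' x -> top_sorted k' y -> top_sorted k' z ->
  k <= size w + size x + size y + size z ->
  top_sorted k' (merge4 k w x y z).
Proof.
move=> _ le_kk' le_zy le_yx le_xw /top_sorted_lead_ones w_ones /top_sorted_lead_ones x_ones
  /top_sorted_lead_ones y_ones /top_sorted_lead_ones z_ones _.
apply/top_sorted_lead_ones; rewrite /merge4.
have [_ ->] := merge4_rec_size_count k le_zy le_yx le_xw (leqnn _).
apply: (lead_onesW (merge4_rec_lead_ones le_zy le_yx le_xw (leqnn _) w_ones x_ones y_ones z_ones)).
lia.
Qed.
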